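(* Let $K_2$ denote the metric space with two points at distance $1$. For a path $(X_t)_{0<t\ll 1}$ of finite metric spaces, let $f^X$ denote the (partially defined) function on $(0,\infty)$ given by $f^X(s)=\lim_{t\to 0}|sX_t|$. Then: (1) For every $\ell\in(1,\infty)$ there exists a path $(X_t)_{0<t\ll1}$ in $\operatorname{FMet}$ such that $X_t\to K_2$ in the Gromov--Hausdorff topology as $t\to0$, but $\lim_{s\to 0}f^X(s)=\ell$. (2) For every $L\in(2,\infty)$ there exists a path $(X_t)_{0<t\ll1}$ in $\operatorname{FMet}$ such that $X_t\to K_2$ as $t\to 0$, but $\lim_{s\to\infty}f^X(s)=L$. (3) For every $S\in(0,\infty)$ there exists a path $(X_t)_{0<t\ll1}$ in $\operatorname{FMet}$ such that $X_t\to K_2$ as $t\to0$, but the function $f^X$ has a singularity at $S$ (i.e. $f^X(s)$ is unbounded as $s\to S$).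
   Context: For a finite metric space $(X,d)$, its similarity matrix $Z_X$ is the $X\times X$ matrix with entries $e^{-d(x,y)}$. A weighting is a vector $\mathbf{w}\in\mathbb{R}^X$ with $Z_X\mathbf{w}=(1,\dots,1)^\top$; if one exists, the magnitude $|X|$ is the sum of its entries (independent of the choice). For $s>0$, $sX$ denotes the metric space $(X, s\,d)$. $\operatorname{FMet}$ is the set of isometry classes of finite metric spaces with the Gromov--Hausdorff metric. A path $(X_t)_{0<t\ll1}$ is a family of finite metric spaces indexed by $t$ in some interval $(0,\varepsilon)$. *)

From HB Require Import structures.
From mathcomp Require Import all_boot all_order all_algebra.
From mathcomp Require Import all_classical all_reals.
From mathcomp.analysis Require Import sequences exp.
Set Implicit Arguments. Unset Strict Implicit. Unset Printing Implicit Defensive.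
Import Order.TTheory GRing.Theory Num.Theory.
Local Open Scope ring_scope.

(* A finite metric space, with point set 'I_card (isometry classes are
   represented by any labelling of the points). *)
Record finMetric (R : realType) := FinMetric {
  card : nat;
  dist : 'I_card -> 'I_card -> R;
  dist_self : forall x, dist x x = 0;
  dist_sym : forall x y, dist x y = dist y x;
  dist_pos : forall x y, x != y -> 0 < dist x y;
  dist_tri : forall x y z, dist x z <= dist x y + dist y z }.
Arguments card {R} f.
Arguments dist {R} f _ _.

Definition K2_dist (R : realType) (i j : 'I_2) : R := if i == j then 0 else 1.

Lemma K2_self (R : realType) x : K2_dist R x x = 0.
Proof. by rewrite /K2_dist eqxx. Qed.

Lemma K2_sym (R : realType) x y : K2_dist R x y = K2_dist R y x.
Proof. by rewrite /K2_dist eq_sym. Qed.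

Lemma K2_pos (R : realType) x y : x != y -> 0 < K2_dist R x y.
Proof. by rewrite /K2_dist => /negbTE ->; rewrite ltr01. Qed.

Lemma K2_tri (R : realType) x y z :
  K2_dist R x z <= K2_dist R x y + K2_dist R y z.
Proof.
rewrite /K2_dist; case: (x =P z) => [->|Hxz]; first by
  case: (z == y); case: (y == z); rewrite ?addr0 ?add0r ?ler01 ?addr_ge0 ?ler01.
case: (x =P y) => [Hxy|_]; case: (y =P z) => [Hyz|_] //=;
  rewrite ?add0r ?addr0 //.
- by case: Hxz; rewrite Hxy Hyz.
- by rewrite lerDl ler01.
Qed.

Definition K2 (R : realType) : finMetric R :=
  FinMetric (@K2_self R) (@K2_sym R) (@K2_pos R) (@K2_tri R).

(* [scaled_magnitude X s m] : the metric space sX (distances s * d) has a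
   weighting w (Z_{sX} w = (1,...,1)^T, Z_{sX} x y = e^{-s d(x,y)}) whose
   entries sum to m, i.e. |sX| is defined and equals m. *)
Definition scaled_magnitude (R : realType) (X : finMetric R) (s m : R) : Prop :=
  exists w : 'I_(card X) -> R,
    (forall x, \sum_(y < card X) expR (- (s * dist X x y)) * w y = 1)
    /\ \sum_(y < card X) w y = m.

(* A path (X_t)_{0<t<<1} is represented by X : R -> finMetric R; only the
   values for small positive t matter.
   [fX X s l] : f^X(s) is defined and equals l, i.e. |sX_t| is defined for all
   sufficiently small t > 0 and |sX_t| -> l as t -> 0+. *)
Definition fX (R : realType) (X : R -> finMetric R) (s l : R) : Prop :=
  (exists e : R, 0 < e /\ forall t, 0 < t < e -> exists m, scaled_magnitude (X t) s m)
  /\ (forall eps : R, 0 < eps -> exists del : R, 0 < del /\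
        forall t m, 0 < t < del -> scaled_magnitude (X t) s m -> `|m - l| < eps).

(* Correspondences and Gromov--Hausdorff distance for finite spaces:
   d_GH(X,Y) = 1/2 min_C dis(C); hence d_GH(X,Y) < r iff some correspondence
   has distortion < 2r. *)
Definition correspondence (R : realType) (X Y : finMetric R)
    (C : 'I_(card X) -> 'I_(card Y) -> bool) : Prop :=
  (forall x, exists y, C x y) /\ (forall y, exists x, C x y).

Definition GH_lt (R : realType) (X Y : finMetric R) (r : R) : Prop :=
  exists C, correspondence C /\
    forall x x' y y', C x y -> C x' y' ->
      `|dist X x x' - dist Y y y'| < 2 * r.

Definition GH_conv (R : realType) (X : R -> finMetric R) (Y : finMetric R) : Prop :=
  forall eps : R, 0 < eps -> exists del : R, 0 < del /\
    forall t, 0 < t < del -> GH_lt (X t) Y eps.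

Definition fX_lim0 (R : realType) (X : R -> finMetric R) (l : R) : Prop :=
  (exists del : R, 0 < del /\ forall s, 0 < s < del -> exists v, fX X s v)
  /\ (forall eps : R, 0 < eps -> exists del : R, 0 < del /\
        forall s v, 0 < s < del -> fX X s v -> `|v - l| < eps).

Definition fX_limoo (R : realType) (X : R -> finMetric R) (L : R) : Prop :=
  (exists M : R, forall s, M < s -> exists v, fX X s v)
  /\ (forall eps : R, 0 < eps -> exists M : R,
        forall s v, M < s -> fX X s v -> `|v - L| < eps).

Definition fX_singular (R : realType) (X : R -> finMetric R) (S : R) : Prop :=
  (exists del : R, 0 < del /\
     forall s, 0 < s -> 0 < `|s - S| < del -> exists v, fX X s v)
  /\ (forall (B del : R), 0 < del -> exists s v,
        [/\ 0 < s, 0 < `|s - S| < del, fX X s v & B < `|v|]).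

From Pilot Require Import Defs.
From mathcomp Require Import all_boot all_order all_algebra.
From mathcomp Require Import all_classical all_reals.
From mathcomp.analysis Require Import sequences exp.
From mathcomp Require Import topology normedtype derive realfun.
From mathcomp.algebra_tactics Require Import ring lra.
Set Implicit Arguments. Unset Strict Implicit. Unset Printing Implicit Defensive.
Import Order.TTheory GRing.Theory Num.Theory.
Import numFieldNormedType.Exports.
Local Open Scope ring_scope.
Local Open Scope classical_set_scope.

(* Let Y_t consist of two clusters of n + 1 points, at mutual distances a t and
   c t inside the clusters and t between them.  When n (a + c) = 2 (n + 1), the
   first-order terms of the weighting equations cancel, and |s Y_t| tends, as
   t -> 0, to a limit W > 1 that does not depend on s, although Y_t collapses to
   a point; n, a and c can be chosen so that W takes any prescribed value > 1.
   Attaching to Y_t a new point at distance 1 + d(p, y) from each y (the wedge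
   with a unit segment at p) gives X_t -> K_2 with f^X(s) = W + 2/(1 + e^-s) - 1,
   which tends to W as s -> 0 and to W + 1 as s -> oo.  Attaching instead a point
   at distance 1 from all of Y_t gives f^X(s) = (W + 1 - 2qW) / (1 - q^2 W) with
   q = e^-s, which blows up where e^(2s) = W. *)

Section AtRight0.
Variable R : realType.

Lemma near_at_right0P {P : R -> Prop} :
  (\forall t \near 0^'+, P t) <-> exists e : R, 0 < e /\ forall t, 0 < t < e -> P t.
Proof.
split=> [|[e [e0 eP]]].
- rewrite near_withinE => /nbhs_ballP[e /= e0 eP].
  exists e; split=> // t /andP[t0 te]; apply: eP => //.
  by rewrite /ball /= sub0r normrN gtr0_norm.
- near=> t; apply: eP; apply/andP; split; near: t;
    [exact: nbhs_right_gt | exact: nbhs_right_lt].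
Unshelve. all: by end_near. Qed.

Lemma near_at_right0_scale (P : R -> Prop) (s : R) : 0 < s ->
  (\forall r \near 0^'+, P r) -> \forall t \near 0^'+, P (s * t).
Proof.
move=> s0 /near_at_right0P[e [e0 eP]]; apply/near_at_right0P.
exists (e / s); split=> [|t /andP[t0 ts]]; first by rewrite divr_gt0.
by apply: eP; rewrite mulr_gt0 //= mulrC -ltr_pdivlMr.
Qed.

Lemma cvg_at_right0_scale (g : R -> R) (s l : R) : 0 < s ->
  g @ 0^'+ --> l -> (fun t => g (s * t)) @ 0^'+ --> l.
Proof. by move=> s0 gl A /gl; exact: near_at_right0_scale. Qed.

Lemma is_derive_cvg_at_right (f : R -> R) (a df : R) :
  is_derive a 1 f df -> f r @[r --> a^'+] --> f a.
Proof.
move=> fdf; apply: cvg_at_right_filter; apply: differentiable_continuous.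
exact/derivable1_diffP/ex_derive.
Qed.

End AtRight0.

Section ExpRemainder.
Variable R : realType.

Definition expR_rem2 (x r : R) := (expR (- (r * x)) - 1 + r * x) / r ^+ 2.

Lemma expR_rem2E (x r : R) : r != 0 ->
  expR (- (r * x)) = 1 - r * (x - r * expR_rem2 x r).
Proof. by move=> r0; rewrite /expR_rem2; field. Qed.

Lemma expR_rem2_cvg (x : R) : expR_rem2 x @ 0^'+ --> x ^+ 2 / 2.
Proof.
apply: (@lhopital_at_right R _ (fun r => x - x * expR (- (r * x))) _
  (fun r => 2 * r) 0 1 _ ltr01).
- by move=> r _; apply: is_derive_eq; rewrite /GRing.scale /=; ring.
- by move=> r _; apply: is_derive_eq; rewrite /GRing.scale /=; ring.
- have := @is_derive_cvg_at_right R (fun r => expR (- (r * x)) - 1 + r * x) 0 _ _.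
  by rewrite mul0r oppr0 expR0 subrr add0r; apply.
- have := @is_derive_cvg_at_right R (fun r => r ^+ 2) 0 _ _.
  by rewrite expr0n; apply.
- by move=> r; rewrite in_itv /= => /andP[r0 _]; rewrite mulf_neq0 ?gt_eqF.
apply: (@lhopital_at_right R _ (fun r => x ^+ 2 * expR (- (r * x))) _
  (fun=> 2) 0 1 _ ltr01).
- by move=> r _; apply: is_derive_eq; rewrite /GRing.scale /=; ring.
- by move=> r _; apply: is_derive_eq; rewrite /GRing.scale /=; ring.
- have := @is_derive_cvg_at_right R (fun r => x - x * expR (- (r * x))) 0 _ _.
  by rewrite mul0r oppr0 expR0 mulr1 subrr; apply.
- have := @is_derive_cvg_at_right R (fun r => 2 * r) 0 _ _.
  by rewrite mulr0; apply.
- by move=> r _; rewrite pnatr_eq0.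
have := @is_derive_cvg_at_right R (fun r => x ^+ 2 * expR (- (r * x)) / 2) 0 _ _.
by rewrite mul0r oppr0 expR0 mulr1; apply.
Qed.

Lemma expR_slope_cvg (x : R) :
  (fun r => x - r * expR_rem2 x r) @ 0^'+ --> x.
Proof.
have id0 : (fun r : R => r) @ 0^'+ --> 0 by exact: cvg_at_right_filter.
have := cvgB (cvg_cst x) (cvgM id0 (@expR_rem2_cvg x)).
by rewrite mul0r subr0; apply.
Qed.

End ExpRemainder.

Section TwoClusterLimit.
Variables (R : realType) (N a c : R).
Hypothesis sum_ac : (N - 1) * (a + c) = 2 * N.

Definition cluster_num (r : R) :=
  N * (2 + (N - 1) * (expR (- (r * a)) + expR (- (r * c))) - 2 * N * expR (- (r * 1))).

Definition cluster_det (r : R) :=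
  (1 + (N - 1) * expR (- (r * a))) * (1 + (N - 1) * expR (- (r * c)))
  - (N * expR (- (r * 1))) ^+ 2.

Definition cluster_mag (r : R) := cluster_num r / cluster_det r.

Definition cluster_quad := (N - 1) * (a ^+ 2 + c ^+ 2) / 2.

Definition cluster_limit := N - N ^+ 2 / cluster_quad.

(* [slope x r] is (1 - e^(-r x)) / r. *)
Let slope (x r : R) := x - r * expR_rem2 x r.

Let num_quot (r : R) :=
  N * ((N - 1) * (expR_rem2 a r + expR_rem2 c r) - 2 * N * expR_rem2 1 r).

Let det_quot (r : R) := num_quot r
  + ((N - 1) ^+ 2 * slope a r * slope c r - N ^+ 2 * (slope 1 r * slope 1 r)).

Let cluster_numE r : r != 0 -> cluster_num r = r ^+ 2 * num_quot r.
Proof.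
move=> r0; transitivity (r ^+ 2 * num_quot r + N * r * (2 * N - (N - 1) * (a + c))).
  by rewrite /cluster_num !(expR_rem2E _ r0) /num_quot; ring.
by rewrite sum_ac subrr mulr0 addr0.
Qed.

Let cluster_detE r : r != 0 -> cluster_det r = r ^+ 2 * det_quot r.
Proof.
move=> r0; rewrite /det_quot mulrDr -cluster_numE //.
by rewrite /cluster_det /cluster_num !(expR_rem2E _ r0) /slope; ring.
Qed.

Let num_quot_cvg : num_quot @ 0^'+ --> N * (cluster_quad - N).
Proof.
have -> : N * (cluster_quad - N) =
    N * ((N - 1) * (a ^+ 2 / 2 + c ^+ 2 / 2) - 2 * N * (1 ^+ 2 / 2)).
  by rewrite /cluster_quad; field.
by apply: cvgMl_tmp; apply: cvgB; apply: cvgMl_tmp; [apply: cvgD|];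
  exact: expR_rem2_cvg.
Qed.

Let det_quot_cvg : det_quot @ 0^'+ --> cluster_quad.
Proof.
have -> : cluster_quad =
    N * (cluster_quad - N) + ((N - 1) ^+ 2 * a * c - N ^+ 2 * (1 * 1)).
  transitivity (cluster_quad
    + ((N - 1) * (a + c) - 2 * N) * ((N - 1) * (a + c) + 2 * N) / 2).
    by rewrite sum_ac subrr !mul0r addr0.
  by rewrite /cluster_quad; field.
apply: cvgD; first exact: num_quot_cvg.
by apply: cvgB; [apply: cvgM; first apply: cvgMl_tmp | apply: cvgMl_tmp; apply: cvgM];
  exact: expR_slope_cvg.
Qed.

Hypothesis quad_gt0 : 0 < cluster_quad.

Lemma cluster_mag_cvg : cluster_mag @ 0^'+ --> cluster_limit.
Proof.
have -> : cluster_limit = N * (cluster_quad - N) / cluster_quad.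
  by rewrite /cluster_limit; field; rewrite gt_eqF.
apply: (@cvg_trans _ _ _ _ _ (cvgM num_quot_cvg (cvgV (lt0r_neq0 quad_gt0) det_quot_cvg))).
apply: near_eq_cvg; near=> r.
have r0 : r != 0 by rewrite gt_eqF //; near: r; exact: nbhs_right_gt.
by rewrite /cluster_mag cluster_numE // cluster_detE // -mulf_div divff ?mul1r // expf_neq0.
Unshelve. all: by end_near. Qed.

Lemma cluster_det_near : \forall r \near 0^'+, cluster_det r != 0.
Proof.
have dq0 := cvgr_gt _ det_quot_cvg _ quad_gt0.
near=> r; have r0 : 0 < r by near: r; exact: nbhs_right_gt.
rewrite cluster_detE ?gt_eqF // mulr_gt0 ?exprn_gt0 //.
by near: r; exact: dq0.
Unshelve. all: by end_near. Qed.

End TwoClusterLimit.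

Section MagnitudeLimits.
Variable R : realType.

Lemma scaled_magnitude_unique (X : finMetric R) (s m1 m2 : R) :
  scaled_magnitude X s m1 -> scaled_magnitude X s m2 -> m1 = m2.
Proof.
move=> [w1 [w1Z <-]] [w2 [w2Z <-]].
pose Z x y := expR (- (s * dist X x y)).
transitivity (\sum_(x < Defs.card X) \sum_(y < Defs.card X) w1 x * (Z x y * w2 y)).
  by apply: eq_bigr => x _; rewrite -mulr_sumr w2Z mulr1.
rewrite exchange_big /=; apply: eq_bigr => y _.
rewrite -[RHS]mulr1 -(w1Z y) mulr_sumr; apply: eq_bigr => x _.
by rewrite /Z dist_sym; ring.
Qed.

Lemma fXE (X : R -> finMetric R) (s l : R) (F : R -> R) :
  (\forall t \near 0^'+, scaled_magnitude (X t) s (F t)) -> F @ 0^'+ --> l ->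
  forall v, fX X s v <-> v = l.
Proof.
move=> XF Fl v; split=> [[_ Xv]|->].
  suff Fv : F @ 0^'+ --> v by exact: norm_cvg_unique Fv Fl.
  apply/cvgrPdistC_lt => e /(Xv e)[d [d0 dP]].
  have td : \forall t \near 0^'+, 0 < t < d by apply/near_at_right0P; exists d.
  by near=> t; apply: dP; near: t; [exact: td | exact: XF].
split; first by apply/near_at_right0P; near=> t; exists (F t); near: t.
move=> e e0; have /near_at_right0P[d [d0 dP]] :
    \forall t \near 0^'+, scaled_magnitude (X t) s (F t) /\ `|F t - l| < e.
  by near=> t; split; near: t; [exact: XF | exact: cvgr_distC_lt].
by exists d; split=> // t m /dP[XFt Fte] /(scaled_magnitude_unique XFt) <-.
Unshelve. all: by end_near. Qed.

Lemma fX_lim0_of (X : R -> finMetric R) (g : R -> R) (l : R) :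
  (forall s v, 0 < s -> fX X s v <-> v = g s) -> g @ 0^'+ --> l -> fX_lim0 X l.
Proof.
move=> Xg gl; split.
  by exists 1; split=> // s /andP[s0 _]; exists (g s); apply/(Xg _ _ s0).
move=> e /(cvgr_distC_lt _ _ gl) /near_at_right0P[d [d0 gd]].
by exists d; split=> // s v sd /(Xg _ _ (andP sd).1) ->; exact: gd.
Qed.

Lemma fX_limoo_of (X : R -> finMetric R) (g : R -> R) (L : R) :
  (forall s v, 0 < s -> fX X s v <-> v = g s) -> g @ +oo --> L -> fX_limoo X L.
Proof.
move=> Xg gL; split.
  by exists 0 => s s0; exists (g s); apply/(Xg _ _ s0).
move=> e /(cvgr_distC_lt _ _ gL)[M [_ gM]].
exists (Num.max M 0) => s v; rewrite gt_max => /andP[Ms s0] /(Xg _ _ s0) ->.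
exact: gM.
Qed.

Lemma fX_singular_of (X : R -> finMetric R) (g : R -> R) (S : R) : 0 < S ->
  (forall s, 0 < s -> s != S -> fX X s (g s)) -> g @ S^'+ --> +oo ->
  fX_singular X S.
Proof.
move=> S0 Xg gy; split.
  exists S; split=> // s s0 /andP[sS _]; exists (g s); apply: Xg => //.
  by move: sS; rewrite normr_gt0 subr_eq0.
move=> B d d0.
have : \forall s \near S^'+, [/\ S < s, s < S + d & B < g s].
  near=> s; split; near: s;
    [exact: nbhs_right_gt | apply: nbhs_right_lt; rewrite ltrDl // | exact: cvgry_gt].
move=> /filter_ex[s [Ss sSd Bg]].
exists s, (g s); split.
- exact: lt_trans Ss.
- by rewrite gtr0_norm ?subr_gt0 // Ss ltrBlDl.
- by apply: Xg; [exact: lt_trans Ss | rewrite gt_eqF].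
- exact: lt_le_trans Bg (ler_norm _).
Unshelve. all: by end_near. Qed.

End MagnitudeLimits.

Section MetricConstructions.
Variable R : realType.

Lemma dist_ge0 (X : finMetric R) x y : 0 <= dist X x y.
Proof. by have [->|/dist_pos/ltW //] := eqVneq x y; rewrite dist_self. Qed.

Definition scale_metric (X : finMetric R) (k : R) (k_gt0 : 0 < k) : finMetric R.
Proof.
refine (@FinMetric R (Defs.card X) (fun x y => k * dist X x y) _ _ _ _).
- by move=> x; rewrite dist_self mulr0.
- by move=> x y; rewrite dist_sym.
- by move=> x y xy; rewrite mulr_gt0 ?dist_pos.
- by move=> x y z; rewrite -mulrDr ler_pM2l ?dist_tri.
Defined.

Lemma scaled_magnitude_scale (X : finMetric R) (k : R) (k_gt0 : 0 < k) (s m : R) :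
  scaled_magnitude (scale_metric X k_gt0) s m <-> scaled_magnitude X (s * k) m.
Proof.
have Z x y : expR (- (s * (k * dist X x y))) = expR (- (s * k * dist X x y)).
  by rewrite mulrA.
by split=> -[w [wZ ws]]; exists w; split=> // x; rewrite -(wZ x) /=;
  apply: eq_bigr => y _; rewrite Z.
Qed.

Section OnePointExtension.
Variables (Y : finMetric R) (h : 'I_(Defs.card Y) -> R).
Hypotheses (h_gt0 : forall y, 0 < h y)
  (h_lip : forall y y', h y <= h y' + dist Y y' y)
  (h_sum : forall y y', dist Y y y' <= h y + h y').

Definition ext_dist (i j : 'I_(Defs.card Y).+1) : R :=
  match unlift ord0 i, unlift ord0 j with
  | Some x, Some y => dist Y x y
  | Some x, None | None, Some x => h x
  | None, None => 0
  end.

Lemma ext_dist_lift x y : ext_dist (lift ord0 x) (lift ord0 y) = dist Y x y.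
Proof. by rewrite /ext_dist !liftK. Qed.

Lemma ext_dist_lift0 x : ext_dist (lift ord0 x) ord0 = h x.
Proof. by rewrite /ext_dist liftK unlift_none. Qed.

Lemma ext_dist0_lift x : ext_dist ord0 (lift ord0 x) = h x.
Proof. by rewrite /ext_dist liftK unlift_none. Qed.

Lemma ext_dist00 : ext_dist ord0 ord0 = 0.
Proof. by rewrite /ext_dist unlift_none. Qed.

Definition ext_metric : finMetric R.
Proof.
refine (@FinMetric R (Defs.card Y).+1 ext_dist _ _ _ _).
- by move=> x; case: (unliftP ord0 x) => [y ->|->];
    rewrite ?ext_dist_lift ?ext_dist00 ?dist_self.
- move=> x y; case: (unliftP ord0 x) => [x' ->|->]; case: (unliftP ord0 y) => [y' ->|->];
    by rewrite ?ext_dist_lift ?ext_dist_lift0 ?ext_dist0_lift ?ext_dist00 // dist_sym.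
- move=> x y; case: (unliftP ord0 x) => [x' ->|->]; case: (unliftP ord0 y) => [y' ->|->];
    rewrite ?ext_dist_lift ?ext_dist_lift0 ?ext_dist0_lift ?ext_dist00 ?eqxx //.
  by move=> xy; apply: dist_pos; apply: contraNneq xy => ->.
- move=> x y z; case: (unliftP ord0 x) => [x' ->|->];
    case: (unliftP ord0 y) => [y' ->|->]; case: (unliftP ord0 z) => [z' ->|->];
    rewrite ?ext_dist_lift ?ext_dist_lift0 ?ext_dist0_lift ?ext_dist00.
  + exact: dist_tri.
  + by have := h_lip x' y'; rewrite dist_sym; lra.
  + exact: h_sum.
  + lra.
  + by have := h_lip z' y'; lra.
  + by have := h_gt0 y'; lra.
  + lra.
  + lra.
Defined.

Lemma GH_lt_ext_K2 (y0 : 'I_(Defs.card Y)) (delta eps : R) :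
  (forall y y', dist Y y y' <= delta) -> (forall y, `|h y - 1| <= delta) ->
  delta < 2 * eps -> GH_lt ext_metric (K2 R) eps.
Proof.
move=> Ydelta hdelta delta_eps.
have delta0 : 0 <= delta by apply: le_trans (hdelta y0).
exists (fun i j => j == if unlift ord0 i is Some _ then ord0 else ord_max).
split; first split.
- by move=> x; eexists; exact: eqxx.
- case=> [[|[|//]]] j;
    [exists (lift ord0 y0); rewrite liftK | exists ord0; rewrite unlift_none];
    exact/eqP/val_inj.
- move=> x x' y y' /eqP -> /eqP ->.
  case: (unliftP ord0 x) => [u ->|->]; case: (unliftP ord0 x') => [u' ->|->];
    rewrite ?liftK ?unlift_none /= /K2_dist /=.
  + by rewrite ext_dist_lift subr0 ger0_norm ?dist_ge0 //; have := Ydelta u u'; lra.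
  + by rewrite ext_dist_lift0; have := hdelta u; lra.
  + by rewrite ext_dist0_lift; have := hdelta u'; lra.
  + by rewrite ext_dist00 subrr normr0; lra.
Qed.

End OnePointExtension.

End MetricConstructions.

Section WedgeAndCone.
Variable R : realType.

Section Wedge.
Variables (Y : finMetric R) (p : 'I_(Defs.card Y)) (D : R).
Hypothesis D_gt0 : 0 < D.

Definition wedge_metric : finMetric R.
Proof.
apply: (@ext_metric R Y (fun y => D + dist Y p y)) => [y|y y'|y y'] /=.
- by have := dist_ge0 p y; have := D_gt0; lra.
- by have := dist_tri p y' y; lra.
- by have := dist_tri y p y'; rewrite (dist_sym y p); have := D_gt0; lra.
Defined.

Lemma wedge_magnitude (s M : R) : scaled_magnitude Y s M ->
  scaled_magnitude wedge_metric s (M + 2 / (1 + expR (- (s * D))) - 1).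
Proof.
move=> [w [wZ wM]].
set q := expR (- (s * D)).
have q1_neq0 : 1 + q != 0 by rewrite lt0r_neq0 // ltr_pwDr ?expR_gt0.
set b := 1 / (1 + q).
have Zp y : expR (- (s * (D + dist Y p y))) = q * expR (- (s * dist Y p y)).
  by rewrite mulrDr opprD expRD.
have sum_bump (f : 'I_(Defs.card Y) -> R) :
    \sum_y f y * (w y + (if y == p then b - 1 else 0)) = \sum_y f y * w y + f p * (b - 1).
  transitivity (\sum_y (f y * w y + (if y == p then f y * (b - 1) else 0))).
    by apply: eq_bigr => y _; case: eqP => [->|_]; rewrite ?addr0 ?mulrDr.
  by rewrite big_split /= -big_mkcond big_pred1_eq.
(* As for any wedge sum: w, plus the weighting b, b of the glued segment, minus
   the weighting 1 of the common point p. *)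
exists (fun i => if unlift ord0 i is Some y then w y + (if y == p then b - 1 else 0) else b).
split.
- move=> x; rewrite big_ord_recl /=; case: (unliftP ord0 x) => [x' ->|->].
  + rewrite ext_dist_lift0 unlift_none Zp.
    under eq_bigr do rewrite ext_dist_lift liftK.
    by rewrite sum_bump wZ dist_sym /b; field.
  + rewrite ext_dist00 unlift_none mulr0 oppr0 expR0 mul1r.
    under eq_bigr do rewrite ext_dist0_lift liftK Zp -mulrA.
    by rewrite -mulr_sumr sum_bump wZ dist_self mulr0 oppr0 expR0 /b; field.
- rewrite big_ord_recl /= unlift_none.
  under eq_bigr do rewrite liftK -[w _ + _]mul1r.
  by rewrite sum_bump; under eq_bigr do rewrite mul1r; rewrite wM /b; field.
Qed.

End Wedge.

Section Cone.
Variables (Y : finMetric R) (D : R).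
Hypotheses (D_gt0 : 0 < D) (Y_diam : forall y y', dist Y y y' <= 2 * D).

Definition cone_metric : finMetric R.
Proof.
apply: (@ext_metric R Y (fun=> D)) => [y|y y'|y y'] //.
- by rewrite lerDl dist_ge0.
- by have := Y_diam y y'; lra.
Defined.

Lemma cone_magnitude (s M : R) : scaled_magnitude Y s M ->
  1 - expR (- (s * D)) ^+ 2 * M != 0 ->
  scaled_magnitude cone_metric s
    ((M + 1 - 2 * expR (- (s * D)) * M) / (1 - expR (- (s * D)) ^+ 2 * M)).
Proof.
move=> [w [wZ wM]]; set q := expR (- (s * D)); set den := 1 - q ^+ 2 * M => den0.
exists (fun i => if unlift ord0 i is Some y then (1 - q) / den * w y else (1 - q * M) / den).
split.
- move=> x; rewrite big_ord_recl /=; case: (unliftP ord0 x) => [x' ->|->].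
  + rewrite ext_dist_lift0 unlift_none.
    under eq_bigr do rewrite ext_dist_lift liftK mulrCA.
    by rewrite -mulr_sumr wZ -/q /den; field.
  + rewrite ext_dist00 unlift_none.
    under eq_bigr do rewrite ext_dist0_lift liftK -/q mulrCA.
    by rewrite -!mulr_sumr wM mulr0 oppr0 expR0 /den; field.
- rewrite big_ord_recl /= unlift_none.
  under eq_bigr do rewrite liftK.
  by rewrite -mulr_sumr wM /den; field.
Qed.

End Cone.

End WedgeAndCone.

Section TwoClusters.
Variables (R : realType) (n : nat) (a c : R).
Hypotheses (a_gt0 : 0 < a) (a_le2 : a <= 2) (c_gt0 : 0 < c) (c_le2 : c <= 2).

Definition in_left (i : 'I_(n + n)) := (i < n)%N.

Lemma in_left_lshift (i : 'I_n) : in_left (lshift n i).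
Proof. by rewrite /in_left /= ltn_ord. Qed.

Lemma in_left_rshift (i : 'I_n) : in_left (rshift n i) = false.
Proof. by rewrite /in_left /= ltnNge leq_addr. Qed.

Definition cluster_dist (i j : 'I_(n + n)) : R :=
  if i == j then 0
  else if in_left i then (if in_left j then a else 1) else (if in_left j then 1 else c).

Lemma cluster_dist_ll (i j : 'I_n) :
  cluster_dist (lshift n i) (lshift n j) = if i == j then 0 else a.
Proof. by rewrite /cluster_dist eq_shift !in_left_lshift. Qed.

Lemma cluster_dist_rr (i j : 'I_n) :
  cluster_dist (rshift n i) (rshift n j) = if i == j then 0 else c.
Proof. by rewrite /cluster_dist eq_shift !in_left_rshift. Qed.

Lemma cluster_dist_lr (i j : 'I_n) : cluster_dist (lshift n i) (rshift n j) = 1.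
Proof. by rewrite /cluster_dist eq_shift in_left_lshift in_left_rshift. Qed.

Lemma cluster_dist_rl (i j : 'I_n) : cluster_dist (rshift n i) (lshift n j) = 1.
Proof. by rewrite /cluster_dist eq_shift in_left_lshift in_left_rshift. Qed.

Lemma cluster_dist_le2 i j : cluster_dist i j <= 2.
Proof.
move: a_le2 c_le2 => a2 c2.
by rewrite /cluster_dist; case: eqP; case: in_left; case: in_left => //; lra.
Qed.

Definition two_clusters : finMetric R.
Proof.
refine (@FinMetric R (n + n) cluster_dist _ _ _ _).
- by move=> i; rewrite /cluster_dist eqxx.
- by move=> i j; rewrite /cluster_dist eq_sym; case: eqP; case: in_left; case: in_left.
- by move=> i j /negbTE ij; rewrite /cluster_dist ij; case: in_left; case: in_left.
- move=> i j k; move: a_gt0 c_gt0 a_le2 c_le2 => a0 c0 a2 c2; rewrite /cluster_dist.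
  have [<-|ik] := eqVneq i k.
    by rewrite (eq_sym j i); case: eqP => _; case: (in_left i); case: (in_left j) => /=; lra.
  have [<-|ij] := eqVneq i j; first by rewrite add0r (negbTE ik).
  have [<-|jk] := eqVneq j k; first by rewrite addr0.
  by case: (in_left i); case: (in_left j); case: (in_left k) => /=; lra.
Defined.

Lemma sumr_ord_ifeq (m : nat) (j : 'I_m) (u v : R) :
  \sum_(i < m) (if j == i then u else v) = u + (m%:R - 1) * v.
Proof.
rewrite (bigD1 j) //= eqxx (eq_bigr (fun=> v)) => [|i]; last by rewrite eq_sym => /negbTE ->.
rewrite sumr_const cardC1 card_ord.
by case: m j => [[]//|m] _ /=; rewrite -natr1 addrK mulr_natl.
Qed.

Lemma two_clusters_magnitude (r : R) : cluster_det n%:R a c r != 0 ->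
  scaled_magnitude two_clusters r (cluster_mag n%:R a c r).
Proof.
set N : R := n%:R => det0.
set A := 1 + (N - 1) * expR (- (r * a)).
set C := 1 + (N - 1) * expR (- (r * c)).
set B := N * expR (- (r * 1)).
have detE : cluster_det N a c r = A * C - B ^+ 2 by [].
have Zif (j i : 'I_n) d : expR (- (r * (if j == i then 0 else d))) =
    if j == i then 1 else expR (- (r * d)).
  by case: eqP; rewrite ?mulr0 ?oppr0 ?expR0.
(* By symmetry the weighting is constant on each cluster. *)
exists (fun i => if in_left i then (C - B) / cluster_det N a c r
  else (A - B) / cluster_det N a c r).
split=> [x|]; rewrite big_split_ord /=.
- case: (split_ordP x) => j ->.
  + under eq_bigr do rewrite cluster_dist_ll in_left_lshift Zif.
    under [X in _ + X]eq_bigr do rewrite cluster_dist_lr in_left_rshift.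
    rewrite -mulr_suml sumr_ord_ifeq sumr_const card_ord -/N.
    by rewrite detE /A /B /C; field; rewrite -/A -/B -/C -detE.
  + under eq_bigr do rewrite cluster_dist_rl in_left_lshift.
    under [X in _ + X]eq_bigr do rewrite cluster_dist_rr in_left_rshift Zif.
    rewrite -[X in _ + X]mulr_suml sumr_ord_ifeq sumr_const card_ord -/N.
    by rewrite detE /A /B /C; field; rewrite -/A -/B -/C -detE.
- under eq_bigr do rewrite in_left_lshift.
  under [X in _ + X]eq_bigr do rewrite in_left_rshift.
  rewrite !sumr_const !card_ord /cluster_mag /cluster_num detE /A /B /C.
  by field; rewrite -/A -/B -/C -detE.
Qed.

End TwoClusters.

Section ClusterParameters.
Variable R : realType.

(* a and c are placed symmetrically around N / (N - 1), at the distance d that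
   makes cluster_quad equal to N^2 / (N - W). *)
Lemma cluster_params (W : R) : 1 < W -> exists (n : nat) (a c : R),
  [/\ 0 < a, a <= 2, 0 < c & c <= 2] /\
  [/\ (n.+1%:R - 1) * (a + c) = 2 * n.+1%:R, 0 < cluster_quad n.+1%:R a c
    & cluster_limit n.+1%:R a c = W].
Proof.
move=> W1; pose n := Num.bound (4 * W + 5); set N : R := n.+1%:R.
have NW : 4 * W + 5 < N.
  by apply: (lt_trans (archi_boundP _)); rewrite ?ltr_nat //; lra.
set K := N - 1; have K0 : 0 < K by rewrite /K; lra.
set D := N ^+ 2 * (W - 1) / (K ^+ 2 * (N - W)).
have D0 : 0 <= D by rewrite /D divr_ge0 ?mulr_ge0 ?exprn_ge0 //; lra.
set d := Num.sqrt D; have d0 : 0 <= d := sqrtr_ge0 D.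
have dd : d ^+ 2 = D := sqr_sqrtr D0.
have d_le : d <= (N - 2) / K.
  have : D <= ((N - 2) / K) ^+ 2.
    rewrite /D expr_div_n ler_pdivrMr ?mulr_gt0 ?exprn_gt0 //; last by lra.
    have -> : (N - 2) ^+ 2 / K ^+ 2 * (K ^+ 2 * (N - W)) = (N - 2) ^+ 2 * (N - W).
      by field; rewrite gt_eqF.
    nra.
  have : 0 <= (N - 2) / K by rewrite divr_ge0 //; lra.
  nra.
have NK : N / K - (N - 2) / K = 2 / K by rewrite /K; field; lra.
have NK2 : N / K + (N - 2) / K = 2 by rewrite /K; field; lra.
have twoK : 0 < 2 / K by rewrite divr_gt0.
have NK0 : 0 < N / K by rewrite divr_gt0 //; lra.
exists n, (N / K + d), (N / K - d); split; first by split; lra.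
have quad : cluster_quad N (N / K + d) (N / K - d) = N ^+ 2 / (N - W).
  have sq : (N / K + d) ^+ 2 + (N / K - d) ^+ 2 = 2 * (N / K) ^+ 2 + 2 * d ^+ 2 by ring.
  rewrite /cluster_quad -/K sq dd /D /K; field.
  by rewrite !gt_eqF //; lra.
split.
- by rewrite -/K; field; rewrite gt_eqF.
- by rewrite quad divr_gt0 ?exprn_gt0 //; lra.
- by rewrite /cluster_limit quad; field; rewrite gt_eqF //; lra.
Qed.

End ClusterParameters.

Section ClusterPaths.
Variables (R : realType) (n : nat) (a c : R).
Hypotheses (a_gt0 : 0 < a) (a_le2 : a <= 2) (c_gt0 : 0 < c) (c_le2 : c <= 2).
Hypotheses (sum_ac : (n.+1%:R - 1) * (a + c) = 2 * n.+1%:R)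
  (quad_gt0 : 0 < cluster_quad n.+1%:R a c).

Local Notation N := (n.+1%:R : R).
Local Notation W := (cluster_limit N a c).

(* Only small t matter; clamping t to (0, 1] keeps every member of the path a
   metric space of diameter at most 2. *)
Definition path_scale (t : R) : R := if 0 < t < 1 then t else 1.

Lemma path_scale_gt0 t : 0 < path_scale t.
Proof. by rewrite /path_scale; case: ifP => [/andP[]|]. Qed.

Lemma path_scale_le1 t : path_scale t <= 1.
Proof. by rewrite /path_scale; case: ifP => [/andP[_ /ltW]|]. Qed.

Lemma path_scale_id t : 0 < t < 1 -> path_scale t = t.
Proof. by rewrite /path_scale => ->. Qed.

Definition cluster_path (t : R) : finMetric R :=
  scale_metric (@two_clusters R n.+1 a c a_gt0 a_le2 c_gt0 c_le2) (path_scale_gt0 t).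

Lemma cluster_path_diam t y y' : dist (cluster_path t) y y' <= 2 * path_scale t.
Proof. by rewrite /= mulrC ler_pM2r ?path_scale_gt0 ?cluster_dist_le2. Qed.

Lemma cluster_path_diam1 t y y' : dist (cluster_path t) y y' <= 2 * 1.
Proof.
by rewrite (le_trans (cluster_path_diam y y')) // ler_pM2l ?path_scale_le1.
Qed.

Lemma cluster_path_magnitude (s : R) : 0 < s ->
  \forall t \near 0^'+, scaled_magnitude (cluster_path t) s (cluster_mag N a c (s * t)).
Proof.
move=> s0; have det_near := near_at_right0_scale s0 (cluster_det_near sum_ac quad_gt0).
have t01 : \forall t \near 0^'+, 0 < (t : R) < 1 by apply/near_at_right0P; exists 1.
near=> t; rewrite scaled_magnitude_scale path_scale_id; last by near: t.
by apply: two_clusters_magnitude; near: t.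
Unshelve. all: by end_near. Qed.

Definition wedge_path (t : R) : finMetric R :=
  @wedge_metric R (cluster_path t) (lshift n.+1 ord0) 1 ltr01.

Definition cone_path (t : R) : finMetric R :=
  @cone_metric R (cluster_path t) 1 ltr01 (@cluster_path_diam1 t).

Lemma wedge_path_GH : GH_conv wedge_path (K2 R).
Proof.
move=> e e0; exists (Num.min 1 e); split=> [|t]; first by rewrite lt_min ltr01.
rewrite lt_min => /and3P[t0 t1 te]; have tt : path_scale t = t by rewrite path_scale_id ?t0.
apply: (@GH_lt_ext_K2 R _ _ _ _ _
  (lshift n.+1 ord0 : 'I_(Defs.card (cluster_path t))) (2 * t)) => [y y'|y|]; last lra.
- by have := cluster_path_diam y y'; rewrite tt.
- rewrite addrC addKr ger0_norm ?dist_ge0 //.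
  by have := cluster_path_diam (lshift n.+1 ord0) y; rewrite tt.
Qed.

Lemma cone_path_GH : GH_conv cone_path (K2 R).
Proof.
move=> e e0; exists (Num.min 1 e); split=> [|t]; first by rewrite lt_min ltr01.
rewrite lt_min => /and3P[t0 t1 te]; have tt : path_scale t = t by rewrite path_scale_id ?t0.
apply: (@GH_lt_ext_K2 R _ _ _ _ _
  (lshift n.+1 ord0 : 'I_(Defs.card (cluster_path t))) (2 * t)) => [y y'|y|]; last lra.
- by have := cluster_path_diam y y'; rewrite tt.
- by rewrite subrr normr0; lra.
Qed.

Lemma wedge_path_fXE (s v : R) : 0 < s ->
  fX wedge_path s v <-> v = W + 2 / (1 + expR (- s)) - 1.
Proof.
move=> s0; rewrite -[s in expR (- s)]mulr1.
apply: (fXE (F := fun t => cluster_mag N a c (s * t) + 2 / (1 + expR (- (s * 1))) - 1)).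
  by near=> t; apply: wedge_magnitude; near: t; exact: cluster_path_magnitude.
apply: cvgB; [apply: cvgD|]; last exact: cvg_cst.
- exact: cvg_at_right0_scale (cluster_mag_cvg sum_ac quad_gt0).
- exact: cvg_cst.
Unshelve. all: by end_near. Qed.

Lemma cone_path_fX (s : R) : 0 < s -> 1 - expR (- s) ^+ 2 * W != 0 ->
  fX cone_path s ((W + 1 - 2 * expR (- s) * W) / (1 - expR (- s) ^+ 2 * W)).
Proof.
move=> s0; rewrite -[s in expR (- s)]mulr1; set q := expR (- (s * 1)) => den0.
have mag_cvg := cvg_at_right0_scale s0 (cluster_mag_cvg sum_ac quad_gt0).
have den_cvg : (fun t => 1 - q ^+ 2 * cluster_mag N a c (s * t)) @ 0^'+ -->
    1 - q ^+ 2 * W.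
  by apply: cvgB; [exact: cvg_cst | exact: cvgMl_tmp].
apply/(fXE (F := fun t => (cluster_mag N a c (s * t) + 1 - 2 * q * cluster_mag N a c (s * t))
  / (1 - q ^+ 2 * cluster_mag N a c (s * t)))).
- near=> t; apply: cone_magnitude; near: t; last exact: cvgr_neq0 den_cvg den0.
  exact: cluster_path_magnitude.
- apply: cvgM; last exact: cvgV den0 den_cvg.
  apply: cvgB; first by apply: cvgD; [exact: mag_cvg | exact: cvg_cst].
  by apply: cvgMl_tmp; exact: mag_cvg.
- by [].
Unshelve. all: by end_near. Qed.

End ClusterPaths.

Section Profiles.
Variable R : realType.

Lemma wedge_profile_cvg0 (W : R) :
  (fun s => W + 2 / (1 + expR (- s)) - 1) @ 0^'+ --> W.
Proof.
have q_cvg : (fun s : R => expR (- s)) @ 0^'+ --> (1 : R).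
  have := @is_derive_cvg_at_right R (fun s => expR (- s)) 0 _ _.
  by rewrite oppr0 expR0; apply.
have two_neq0 : (1 + 1 : R) != 0 by rewrite (pnatr_eq0 R 2).
have := cvgB (cvgD (cvg_cst W)
  (cvgMl_tmp (a := 2) (cvgV two_neq0 (cvgD (cvg_cst (1 : R)) q_cvg)))) (cvg_cst (1 : R)).
by rewrite (_ : W + 2 * (1 + 1)^-1 - 1 = W); [apply | field].
Qed.

Lemma wedge_profile_cvgy (W : R) :
  (fun s => W + 2 / (1 + expR (- s)) - 1) @ +oo --> W + 1.
Proof.
have one_neq0 : (1 + 0 : R) != 0 by rewrite addr0 oner_neq0.
have := cvgB (cvgD (cvg_cst W) (cvgMl_tmp (a := 2)
  (cvgV one_neq0 (cvgD (cvg_cst (1 : R)) (@cvgr_expR R))))) (cvg_cst (1 : R)).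
by rewrite (_ : W + 2 * (1 + 0)^-1 - 1 = W + 1); [apply | field].
Qed.

(* With u = e^(S - s), the profile is (E^2 + 1 - 2 E u) / (1 - u^2) with E = e^S:
   the numerator stays above (E - 1)^2 > 0 while the denominator decreases to 0. *)
Lemma cone_profile_cvgy (S : R) : 0 < S ->
  (fun s => (expR S ^+ 2 + 1 - 2 * expR (- s) * expR S ^+ 2)
    / (1 - expR (- s) ^+ 2 * expR S ^+ 2)) @ S^'+ --> +oo.
Proof.
move=> S0; set E := expR S; pose u s := expR (S - s); pose den s := 1 - u s ^+ 2.
have E1 : 1 < E by rewrite pexpR_gt1.
have profileE s : (E ^+ 2 + 1 - 2 * expR (- s) * E ^+ 2) / (1 - expR (- s) ^+ 2 * E ^+ 2)
    = (E ^+ 2 + 1 - 2 * E * u s) / den s.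
  by rewrite /den /u expRD -/E; congr (_ / _); ring.
have den_cvg : den @ S^'+ --> 0.
  have := @is_derive_cvg_at_right R den S _ _.
  by rewrite /den /u subrr expR0 expr1n subrr; apply.
have den_gt0 : \forall s \near S^'+, 0 < den s.
  near=> s; rewrite /den subr_gt0 expr_lt1 ?expR_ge0 // expR_lt1 subr_lt0.
  by near: s; exact: nbhs_right_gt.
have bound : \forall s \near S^'+, (E - 1) ^+ 2 * (den s)^-1 <=
    (E ^+ 2 + 1 - 2 * E * u s) / den s.
  near=> s; rewrite ler_pM2r ?invr_gt0; last by near: s.
  have : u s <= 1 by rewrite expR_le1 subr_le0; apply: ltW; near: s; exact: nbhs_right_gt.
  nra.
have : (fun s => (E - 1) ^+ 2 * (den s)^-1) @ S^'+ --> +oo.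
  apply: gt0_cvgMry; first by rewrite exprn_gt0 // subr_gt0.
  exact/(cvgrVy den_gt0).
move=> /cvgryPgt low; apply/cvgryPgt => A; near=> s; rewrite profileE.
suff [lowA boundA] : A < (E - 1) ^+ 2 * (den s)^-1 /\
    (E - 1) ^+ 2 * (den s)^-1 <= (E ^+ 2 + 1 - 2 * E * u s) / den s.
  exact: lt_le_trans lowA boundA.
by split; near: s; [exact: low | exact: bound].
Unshelve. all: by end_near. Qed.

End Profiles.

Section Examples.
Variable R : realType.

Lemma path_to_K2_with_fX_lim0 (l : R) : 1 < l ->
  exists X : R -> finMetric R, GH_conv X (K2 R) /\ fX_lim0 X l.
Proof.
move=> /cluster_params[n [a [c [[a0 a2 c0 c2] [sum_ac quad0 lim]]]]].
exists (wedge_path n a0 a2 c0 c2); split; first exact: wedge_path_GH.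
apply: (fX_lim0_of (g := fun s => l + 2 / (1 + expR (- s)) - 1)).
  by move=> s v s0; rewrite -lim; exact: wedge_path_fXE.
exact: wedge_profile_cvg0.
Qed.

Lemma path_to_K2_with_fX_limoo (L : R) : 2 < L ->
  exists X : R -> finMetric R, GH_conv X (K2 R) /\ fX_limoo X L.
Proof.
move=> L2; have /cluster_params[n [a [c [[a0 a2 c0 c2] [sum_ac quad0 lim]]]]] : 1 < L - 1.
  by lra.
exists (wedge_path n a0 a2 c0 c2); split; first exact: wedge_path_GH.
apply: (fX_limoo_of (g := fun s => L - 1 + 2 / (1 + expR (- s)) - 1)).
  by move=> s v s0; rewrite -lim; exact: wedge_path_fXE.
by have := wedge_profile_cvgy (W := L - 1); rewrite subrK; apply.
Qed.

Lemma path_to_K2_with_fX_singular (S : R) : 0 < S ->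
  exists X : R -> finMetric R, GH_conv X (K2 R) /\ fX_singular X S.
Proof.
move=> S0; have /cluster_params[n [a [c [[a0 a2 c0 c2] [sum_ac quad0 lim]]]]] :
    1 < expR S ^+ 2 by rewrite exprn_egt1 // pexpR_gt1.
exists (cone_path n a0 a2 c0 c2); split; first exact: cone_path_GH.
apply: fX_singular_of S0 _ (cone_profile_cvgy S0) => s s0 sS.
rewrite -lim; apply: cone_path_fX => //; rewrite lim -exprMn -expRD -expRM_natr.
rewrite subr_eq0 eq_sym -[X in _ == X]expR0 (inj_eq (@expR_inj R)) mulf_eq0 pnatr_eq0 orbF.
by rewrite addrC subr_eq0 eq_sym.
Qed.

End Examples.

Theorem theorem2p7 (R : realType) :
  (forall l : R, 1 < l ->
     exists X : R -> finMetric R, GH_conv X (K2 R) /\ fX_lim0 X l)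
  /\ (forall L : R, 2 < L ->
     exists X : R -> finMetric R, GH_conv X (K2 R) /\ fX_limoo X L)
  /\ (forall S : R, 0 < S ->
     exists X : R -> finMetric R, GH_conv X (K2 R) /\ fX_singular X S).
Proof.
split; first exact: path_to_K2_with_fX_lim0.
split; first exact: path_to_K2_with_fX_limoo.
exact: path_to_K2_with_fX_singular.
Qed.
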